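(* Let $\mathcal A$ be an ordered normed algebra with unit $e$ whose algebra cone $\mathcal A^+$ is normal with normality constant $\alpha$. Let $a,b\in\mathcal A$ with at least one of them positive. Then for every $\delta$ with $0<\delta<\frac{1}{\alpha}e^{-2\alpha\|a\|\,\|b\|}$ there is no $x\in\mathcal A$ with $\|x\|<\delta$ and $ab-ba\geq e+x$.
   Context: A normed algebra $\mathcal A$ (real or complex, with submultiplicative norm) with unit $e$. A cone is a nonempty subset $\mathcal A^+\subseteq\mathcal A$ with $\mathcal A^++\mathcal A^+\subseteq\mathcal A^+$, $\lambda\mathcal A^+\subseteq\mathcal A^+$ for all $\lambda\geq 0$, and $\mathcal A^+\cap(-\mathcal A^+)=\{0\}$; it induces the partial order $a\leq b \iff b-a\in\mathcal A^+$. Elements of $\mathcal A^+$ are called positive. The cone is an algebra cone if $\mathcal A^+\cdot\mathcal A^+\subseteq\mathcal A^+$ and $e\in\mathcal A^+$; then $\mathcal A$ is called an ordered normed algebra. The cone is normal with normality constant $\alpha$ (necessarily $\alpha\geq1$) if $0\leq x\leq y$ implies $\|x\|\leq\alpha\|y\|$. In the bound, $e^{(\cdot)}$ denotes the real exponential function. *)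

From HB Require Import structures.
From mathcomp Require Import all_boot all_order all_algebra.
From mathcomp Require Import reals.
From mathcomp Require Import sequences exp.
Set Implicit Arguments. Unset Strict Implicit. Unset Printing Implicit Defensive.
Import Order.TTheory GRing.Theory Num.Theory.
Local Open Scope ring_scope.

Definition is_algebra_norm (R : realType) (A : algType R) (nrm : A -> R) : Prop :=
  [/\ (forall x, 0 <= nrm x),
      (forall x, nrm x = 0 -> x = 0),
      (forall x y, nrm (x + y) <= nrm x + nrm y),
      (forall (k : R) x, nrm (k *: x) = `|k| * nrm x)
    & (forall x y, nrm (x * y) <= nrm x * nrm y)].

Definition is_cone (R : realType) (A : algType R) (P : A -> Prop) : Prop :=
  [/\ (exists x, P x),
      (forall x y, P x -> P y -> P (x + y)),
      (forall (l : R) x, 0 <= l -> P x -> P (l *: x))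
    & (forall x, P x -> P (- x) -> x = 0)].

Definition is_algebra_cone (R : realType) (A : algType R) (P : A -> Prop) : Prop :=
  [/\ is_cone P, (forall x y, P x -> P y -> P (x * y)) & P 1].

Definition cone_le (R : realType) (A : algType R) (P : A -> Prop) (x y : A) : Prop :=
  P (y - x).

Definition normal_cone (R : realType) (A : algType R) (nrm : A -> R)
    (P : A -> Prop) (alpha : R) : Prop :=
  forall x y, cone_le P 0 x -> cone_le P x y -> nrm x <= alpha * nrm y.

From HB Require Import structures.
From mathcomp Require Import all_boot all_order all_algebra.
From mathcomp Require Import reals.
From mathcomp Require Import topology sequences exp normedtype.
From mathcomp Require Import ring lra.
Set Implicit Arguments. Unset Strict Implicit. Unset Printing Implicit Defensive.
Import Order.TTheory GRing.Theory Num.Theory.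
Import numFieldNormedType.Exports.
Local Open Scope ring_scope.

(* Say [a >= 0] (otherwise use the pair [(b, -a)], which has the same
   commutator) and write [ab - ba = 1 + x + d] with [d >= 0]. Expanding
   [a^(n+1) b - b a^(n+1)] as [sum_i a^(n-i) (ab - ba) a^i] shows that it
   dominates [(n+1) a^n + sum_i a^(n-i) x a^i], so normality gives
   [(n+1) |a^n| <= alpha (2 |b| |a^(n+1)| + (n+1) |x| |a|^n)].
   With [k = 2 alpha |a| |b|] this recursion telescopes into
   [1 - alpha |x| e^k <= k^n / n!] for all [n], whence [e^-k <= alpha |x|],
   which is incompatible with [|x| < delta]. *)

Lemma exp_coeff_ge0 (R : realType) (k : R) n : 0 <= k -> 0 <= exp_coeff k n.
Proof. by move=> k0; rewrite /exp_coeff /= divr_ge0 ?exprn_ge0. Qed.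

Lemma exp_coeffS (R : realType) (k : R) n :
  n.+1%:R * exp_coeff k n.+1 = k * exp_coeff k n.
Proof.
have fn0 : (n`!%:R : R) != 0 by rewrite pnatr_eq0 -lt0n fact_gt0.
by rewrite /exp_coeff /= factS natrM exprS; field; rewrite fn0 addrC natr1 pnatr_eq0.
Qed.

Lemma series_exp_coeff_le_expR (R : realType) (k : R) n :
  0 <= k -> series (exp_coeff k) n <= expR k.
Proof.
move=> k0; apply: nondecreasing_cvgn_le; last exact: is_cvg_series_exp_coeff.
by apply: nondecreasing_series => i _ _; exact: exp_coeff_ge0.
Qed.

Lemma exp_coeff_lbound_le0 (R : realType) (k c : R) :
  (forall n, c <= exp_coeff k n) -> c <= 0.
Proof.
move=> ck; have u0 := cvg_series_cvg_0 (is_cvg_series_exp_coeff k).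
rewrite -(cvg_lim _ u0) //; apply: limr_ge; first exact: cvgP u0.
exact: nearW.
Qed.

Section NormRecursion.
Variables (R : realType) (al be s xi : R) (m : nat -> R).
Hypotheses (al0 : 0 <= al) (be0 : 0 <= be) (s0 : 0 <= s) (xi0 : 0 <= xi).
Hypotheses (m0_ge1 : 1 <= m 0) (m_le : forall n, m n.+1 <= s ^+ n.+1).
Hypothesis m_rec :
  forall n, n.+1%:R * m n <= al * (2 * be * m n.+1 + n.+1%:R * xi * s ^+ n).

Let k := 2 * al * be * s.
Let eta := al * xi.

Let k_ge0 : 0 <= k. Proof. by rewrite /k !mulr_ge0. Qed.

(* Scaling [m_rec n] by [s k^n / (n+1)!] makes it telescope into this invariant. *)
Lemma norm_recursion_invariant n :
  s ^+ n * (1 - eta * series (exp_coeff k) n) <= exp_coeff k n * m n.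
Proof.
elim: n => [|n IH].
  by rewrite /series /= big_geq // expr0 /exp_coeff /= expr0 divr1 !mul1r mulr0 subr0.
have rec_s : n.+1%:R * (s * m n - eta * s ^+ n.+1) <= k * m n.+1.
  by have := ler_wpM2l s0 (m_rec n); rewrite /k /eta exprS; nra.
have IH_s := ler_wpM2l (ler0n R n.+1) (ler_wpM2l s0 IH).
have rec_e := ler_wpM2l (exp_coeff_ge0 n k_ge0) rec_s.
rewrite -(ler_pM2l (ltr0Sn R n)) [X in _ <= X]mulrA exp_coeffS seriesSr exprS.
rewrite exprS in rec_e.
lra.
Qed.

Lemma expRN_le_of_norm_recursion : expR (- (2 * al * be * s)) <= al * xi.
Proof.
rewrite -/k -/eta; have [s_eq0|s_neq0] := eqVneq s 0.
  have := m_rec 0; have := m_le 0.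
  rewrite /k /eta s_eq0 !mulr0 oppr0 expR0 !expr1 !expr0 !mulr1 !mul1r.
  move=> m1_le0 /(le_trans m0_ge1).
  by have := ler_wpM2l (mulr_ge0 al0 be0) m1_le0; lra.
have s_gt0 : 0 < s by rewrite lt_def s_neq0.
suff : 1 - eta * expR k <= 0.
  by rewrite subr_le0 -(ler_pM2r (expR_gt0 (- k))) -mulrA expRxMexpNx_1 mulr1 mul1r.
apply: exp_coeff_lbound_le0 => -[|n].
  by rewrite /exp_coeff /= expr0 divr1 lerBlDr lerDl mulr_ge0 ?expR_ge0 ?mulr_ge0.
have := le_trans (norm_recursion_invariant n.+1)
  (ler_wpM2l (exp_coeff_ge0 n.+1 k_ge0) (m_le n)).
rewrite mulrC ler_pM2r ?exprn_gt0 //; apply: le_trans.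
by rewrite lerB // ler_wpM2l ?mulr_ge0 ?series_exp_coeff_le_expR.
Qed.

End NormRecursion.

Definition expr_deriv (A : pzRingType) (p c : A) n :=
  \sum_(i < n.+1) p ^+ (n - i) * c * p ^+ i.

Section ExprDeriv.
Variables (A : pzRingType) (p : A).

Lemma expr_derivD c d n :
  expr_deriv p (c + d) n = expr_deriv p c n + expr_deriv p d n.
Proof. by rewrite /expr_deriv -big_split; apply: eq_bigr => i _; rewrite mulrDr mulrDl. Qed.

Lemma expr_deriv1 n : expr_deriv p 1 n = p ^+ n *+ n.+1.
Proof.
rewrite /expr_deriv (eq_bigr (fun=> p ^+ n)) ?sumr_const ?card_ord // => i _.
by rewrite mulr1 -exprD subnK ?leq_ord.
Qed.

Lemma expr_derivS c n :
  expr_deriv p c n.+1 = p * expr_deriv p c n + c * p ^+ n.+1.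
Proof.
rewrite /expr_deriv big_ord_recr /= subnn expr0 mul1r mulr_sumr.
congr (_ + _); apply: eq_bigr => i _.
by rewrite /= subSn ?leq_ord // exprS !mulrA.
Qed.

Lemma commutator_exprS q n :
  p ^+ n.+1 * q - q * p ^+ n.+1 = expr_deriv p (p * q - q * p) n.
Proof.
elim: n => [|n IH].
  by rewrite /expr_deriv big_ord1 subnn expr0 expr1 mul1r mulr1.
by rewrite expr_derivS -IH exprS mulrBr mulrBl !mulrA addrA subrK.
Qed.

End ExprDeriv.

Section AlgebraNorm.
Variables (R : realType) (A : algType R) (nrm : A -> R).
Hypothesis nrmA : is_algebra_norm nrm.

Lemma norm_ge0 x : 0 <= nrm x. Proof. by case: nrmA. Qed.

Lemma normD_le x y : nrm (x + y) <= nrm x + nrm y. Proof. by case: nrmA. Qed.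

Lemma normM_le x y : nrm (x * y) <= nrm x * nrm y. Proof. by case: nrmA. Qed.

Lemma normZ (k : R) x : nrm (k *: x) = `|k| * nrm x. Proof. by case: nrmA. Qed.

Lemma norm0 : nrm 0 = 0.
Proof. by rewrite -(scale0r 0) normZ normr0 mul0r. Qed.

Lemma normN x : nrm (- x) = nrm x.
Proof. by rewrite -scaleN1r normZ normrN normr1 mul1r. Qed.

Lemma normB_le x y : nrm (x - y) <= nrm x + nrm y.
Proof. by rewrite -(normN y) normD_le. Qed.

Lemma norm_natmul x n : nrm (x *+ n) = n%:R * nrm x.
Proof. by rewrite -scaler_nat normZ ger0_norm. Qed.

Lemma norm_sum_le I (r : seq I) (F : I -> A) :
  nrm (\sum_(i <- r) F i) <= \sum_(i <- r) nrm (F i).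
Proof.
elim/big_rec2: _ => [|i y z _ yz]; first by rewrite norm0.
exact: le_trans (normD_le _ _) (lerD (lexx _) yz).
Qed.

Lemma norm_exprM_le p y n : nrm (p ^+ n * y) <= nrm p ^+ n * nrm y.
Proof.
elim: n => [|n IH]; first by rewrite !expr0 !mul1r.
rewrite !exprS -!mulrA; apply: le_trans (normM_le _ _) _.
by rewrite ler_wpM2l ?norm_ge0.
Qed.

Lemma norm_mulexpr_le p y n : nrm (y * p ^+ n) <= nrm y * nrm p ^+ n.
Proof.
elim: n => [|n IH]; first by rewrite !expr0 !mulr1.
rewrite !exprSr !mulrA; apply: le_trans (normM_le _ _) _.
by rewrite ler_wpM2r ?norm_ge0.
Qed.

Lemma norm_exprS_le p n : nrm (p ^+ n.+1) <= nrm p ^+ n.+1.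
Proof. by rewrite exprSr [X in _ <= X]exprSr norm_exprM_le. Qed.

Lemma norm1_ge1 : (1 : A) != 0 -> 1 <= nrm 1.
Proof.
move=> one_neq0; have n1_gt0 : 0 < nrm 1.
  rewrite lt_def norm_ge0 andbT; apply: contra one_neq0 => /eqP.
  by case: nrmA => _ nrm_eq0 _ _ _ /nrm_eq0 ->.
by have := normM_le 1 1; rewrite mulr1 -{1}(mulr1 (nrm 1)) ler_pM2l.
Qed.

Lemma norm_expr_deriv_le p c n :
  nrm (expr_deriv p c n) <= n.+1%:R * nrm c * nrm p ^+ n.
Proof.
apply: le_trans (norm_sum_le _ _) _.
have -> : n.+1%:R * nrm c * nrm p ^+ n = \sum_(i < n.+1) nrm c * nrm p ^+ n.
  by rewrite sumr_const card_ord -mulrA mulr_natl.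
apply: ler_sum => i _; apply: le_trans (norm_mulexpr_le _ _ _) _.
apply: le_trans (ler_wpM2r (exprn_ge0 _ (norm_ge0 _)) (norm_exprM_le _ _ _)) _.
by rewrite mulrAC -exprD subnK ?leq_ord // mulrC.
Qed.

End AlgebraNorm.

Section AlgebraCone.
Variables (R : realType) (A : algType R) (P : A -> Prop).
Hypothesis PA : is_algebra_cone P.

Lemma cone0 : P 0.
Proof. by case: PA => -[[x Px] _ PZ _] _ _; rewrite -(scale0r x); apply: PZ. Qed.

Lemma coneD x y : P x -> P y -> P (x + y).
Proof. by case: PA => -[_ PD _ _] _ _; apply: PD. Qed.

Lemma coneM x y : P x -> P y -> P (x * y).
Proof. by case: PA => _ PM _; apply: PM. Qed.

Lemma cone1 : P 1. Proof. by case: PA. Qed.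

Lemma cone_natmul x n : P x -> P (x *+ n).
Proof. by case: PA => -[_ _ PZ _] _ _ Px; rewrite -scaler_nat; apply: PZ. Qed.

Lemma cone_expr p n : P p -> P (p ^+ n).
Proof.
move=> Pp; elim: n => [|n IH]; first by rewrite expr0; apply: cone1.
by rewrite exprS; apply: coneM.
Qed.

Lemma cone_sum I (r : seq I) (F : I -> A) :
  (forall i, P (F i)) -> P (\sum_(i <- r) F i).
Proof. by move=> PF; elim/big_rec: _ => [|i x _ Px]; [apply: cone0 | apply: coneD]. Qed.

Lemma cone_expr_deriv p c n : P p -> P c -> P (expr_deriv p c n).
Proof. by move=> Pp Pc; apply: cone_sum => i; do 2?apply: coneM; try apply: cone_expr. Qed.

End AlgebraCone.

Section NormalAlgebraCone.
Variables (R : realType) (A : algType R) (nrm : A -> R) (P : A -> Prop) (alpha : R).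
Hypotheses (one_neq0 : (1 : A) != 0) (nrmA : is_algebra_norm nrm).
Hypotheses (PA : is_algebra_cone P) (normalP : normal_cone nrm P alpha).

Lemma normal_cone_ge1 : 1 <= alpha.
Proof.
have n1_gt0 : 0 < nrm 1 := lt_le_trans ltr01 (norm1_ge1 nrmA one_neq0).
rewrite -(ler_pM2r n1_gt0) mul1r; apply: normalP; rewrite /cone_le ?subr0 ?subrr.
- exact: cone1.
- exact: cone0.
Qed.

Lemma norm_expr_recursion p q x n :
  P p -> cone_le P (1 + x) (p * q - q * p) ->
  n.+1%:R * nrm (p ^+ n) <=
    alpha * (2 * nrm q * nrm (p ^+ n.+1) + n.+1%:R * nrm x * nrm p ^+ n).
Proof.
rewrite /cone_le => Pp; set d := _ - (1 + x) => Pd.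
have comm_split : p * q - q * p = 1 + x + d by rewrite [RHS]addrC subrK.
have commr_split : p ^+ n.+1 * q - q * p ^+ n.+1 - expr_deriv p x n
    = p ^+ n *+ n.+1 + expr_deriv p d n.
  by rewrite commutator_exprS comm_split !expr_derivD expr_deriv1 addrAC addrK.
have pow_pos : cone_le P 0 (p ^+ n *+ n.+1).
  by rewrite /cone_le subr0; apply: cone_natmul => //; apply: cone_expr.
have pow_le : cone_le P (p ^+ n *+ n.+1)
    (p ^+ n.+1 * q - q * p ^+ n.+1 - expr_deriv p x n).
  by rewrite /cone_le commr_split addrC addKr; apply: cone_expr_deriv.
rewrite -(norm_natmul nrmA); apply: le_trans (normalP pow_pos pow_le) _.
rewrite ler_wpM2l ?(le_trans ler01 normal_cone_ge1) //.
apply: le_trans (normB_le nrmA _ _) (lerD _ (norm_expr_deriv_le nrmA _ _ _)).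
have := normB_le nrmA (p ^+ n.+1 * q) (q * p ^+ n.+1).
have := lerD (normM_le nrmA (p ^+ n.+1) q) (normM_le nrmA q (p ^+ n.+1)).
lra.
Qed.

Lemma expRN_commutator_le p q x :
  P p -> cone_le P (1 + x) (p * q - q * p) ->
  expR (- (2 * alpha * nrm q * nrm p)) <= alpha * nrm x.
Proof.
move=> Pp Pd; apply: (expRN_le_of_norm_recursion (m := fun n => nrm (p ^+ n))).
- exact: le_trans ler01 normal_cone_ge1.
- exact: norm_ge0.
- exact: norm_ge0.
- exact: norm_ge0.
- by rewrite expr0 norm1_ge1.
- exact: norm_exprS_le.
- by move=> n; apply: norm_expr_recursion.
Qed.

End NormalAlgebraCone.

Theorem corollary2p5 (R : realType) (A : algType R) (nrm : A -> R)
    (P : A -> Prop) (alpha : R) :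
  (1 : A) != 0 ->
  is_algebra_norm nrm ->
  is_algebra_cone P ->
  normal_cone nrm P alpha ->
  forall a b : A, (cone_le P 0 a \/ cone_le P 0 b) ->
  forall delta : R, 0 < delta ->
    delta < alpha^-1 * expR (- (2 * alpha * nrm a * nrm b)) ->
    ~ (exists x : A, nrm x < delta /\ cone_le P (1 + x) (a * b - b * a)).
Proof.
move=> one_neq0 nrmA PA normalP a b ab_pos delta _ delta_lt [x [x_lt comm_ge]].
have alpha_gt0 : 0 < alpha := lt_le_trans ltr01 (normal_cone_ge1 one_neq0 nrmA PA normalP).
have expR_le : expR (- (2 * alpha * nrm a * nrm b)) <= alpha * nrm x.
  case: ab_pos; rewrite /cone_le subr0 => Ppos.
  - by rewrite mulrAC; apply: (expRN_commutator_le one_neq0 nrmA PA normalP Ppos).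
  - rewrite -(normN nrmA a); apply: (expRN_commutator_le one_neq0 nrmA PA normalP Ppos).
    by rewrite mulrN mulNr opprK [X in cone_le _ _ X]addrC.
rewrite ltr_pdivlMl // in delta_lt.
have := lt_le_trans delta_lt expR_le; rewrite ltr_pM2l //.
by move/(lt_trans x_lt); rewrite ltxx.
Qed.
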